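(* Let $\Omega\subset\mathbb H^n$ be an open, horizontally bounded and (Euclidean) convex set. If $u:\overline\Omega\to\mathbb R$ is an $H$-convex function with $u=0$ on $\partial\Omega$, and $B_H(\xi_0,3R)\subset\Omega$ for some $\xi_0\in\Omega$ and $R>0$, then $$\frac1{31}\,u(\xi)\ge u(\zeta)\ge 31\,u(\xi)\qquad\forall\xi,\zeta\in B_H(\xi_0,R).$$
   Context: $\mathbb H^n=\mathbb C^n\times\mathbb R\cong\mathbb R^{2n+1}$ with real coordinates $(x,y,t)$, $z=x+iy$, group law $(z,t)\circ(z',t')=(z+z',t+t'+2\,\mathrm{Im}\langle z,z'\rangle)$, $\langle z,z'\rangle=\sum_j z_j\overline{z'_j}$. Dilations $\delta_\lambda(z,t)=(\lambda z,\lambda^2t)$. Horizontal plane at $\xi_0=(x_0,y_0,t_0)$: $H_{\xi_0}=\{(x,y,t):t=t_0+2(x\cdot y_0-x_0\cdot y)\}$. Gauge $N(z,t)=(|z|^4+t^2)^{1/4}$, $d_H(\xi,\zeta)=N(\zeta^{-1}\circ\xi)$, $B_H(\xi,r)=\{\zeta:d_H(\zeta,\xi)<r\}$, $\mathrm{diam}_H$ the $d_H$-diameter; $\Omega$ is horizontally bounded if $\sup\{\mathrm{diam}_H(\Omega\cap H_\xi):\xi\in\Omega\}<\infty$. A function $u$ on an $H$-convex set $\tilde\Omega$ is $H$-convex if $u(\xi_1\circ\delta_\lambda(\xi_1^{-1}\circ\xi_2))\le(1-\lambda)u(\xi_1)+\lambda u(\xi_2)$ for all $\xi_1,\xi_2\in\tilde\Omega$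 with $\xi_1\in H_{\xi_2}$, $\lambda\in[0,1]$. *)

(* H^n = C^n x R ~ R^n x R^n x R, coordinates (x,y,t). *)
From mathcomp Require Import all_boot all_order all_algebra.
From mathcomp Require Import all_classical all_reals all_analysis.
Set Implicit Arguments. Unset Strict Implicit. Unset Printing Implicit Defensive.
Import Order.TTheory GRing.Theory Num.Theory.
Import numFieldNormedType.Exports.
Local Open Scope ring_scope.
Local Open Scope classical_set_scope.

Section Heisenberg.
Variables (R : realType) (n : nat).

(* a point (x, y, t) of H^n, with z = x + i y *)
Local Notation hpt := ('rV[R]_n * 'rV[R]_n * R)%type.

Definition hx (p : hpt) : 'rV[R]_n := p.1.1.
Definition hy (p : hpt) : 'rV[R]_n := p.1.2.
Definition ht (p : hpt) : R := p.2.

Definition dotR (a b : 'rV[R]_n) : R := \sum_(j < n) a 0 j * b 0 j.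

(* Im <z, z'> with <z,z'> = sum_j z_j conj(z'_j) *)
Definition imherm (p q : hpt) : R := dotR (hy p) (hx q) - dotR (hx p) (hy q).

Definition hmul (p q : hpt) : hpt :=
  (hx p + hx q, hy p + hy q, ht p + ht q + 2 * imherm p q).

Definition hinv (p : hpt) : hpt := (- hx p, - hy p, - ht p).

Definition hdil (l : R) (p : hpt) : hpt := (l *: hx p, l *: hy p, l ^+ 2 * ht p).

Definition znorm2 (p : hpt) : R := dotR (hx p) (hx p) + dotR (hy p) (hy p).

Definition gauge (p : hpt) : R := Num.sqrt (Num.sqrt (znorm2 p ^+ 2 + ht p ^+ 2)).

Definition dH (xi zeta : hpt) : R := gauge (hmul (hinv zeta) xi).

Definition BH (xi : hpt) (r : R) : set hpt := [set zeta | dH zeta xi < r].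

Definition hplane (xi0 : hpt) : set hpt :=
  [set p | ht p = ht xi0 + 2 * (dotR (hx p) (hy xi0) - dotR (hx xi0) (hy p))].

Definition horiz_bounded (O : set hpt) : Prop :=
  exists M : R, forall xi, O xi ->
    forall a b, (O `&` hplane xi) a -> (O `&` hplane xi) b -> dH a b <= M.

Definition eucl_comb (l : R) (a b : hpt) : hpt :=
  ((1 - l) *: hx a + l *: hx b, (1 - l) *: hy a + l *: hy b,
   (1 - l) * ht a + l * ht b).

Definition eucl_convex (O : set hpt) : Prop :=
  forall a b l, O a -> O b -> 0 <= l -> l <= 1 -> O (eucl_comb l a b).

Definition H_convex_fun (D : set hpt) (u : hpt -> R) : Prop :=
  forall xi1 xi2 l, D xi1 -> D xi2 -> hplane xi2 xi1 -> 0 <= l -> l <= 1 ->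
    u (hmul xi1 (hdil l (hmul (hinv xi1) xi2))) <= (1 - l) * u xi1 + l * u xi2.

(* topological boundary (Euclidean topology on R^n x R^n x R) *)
Definition hboundary (O : set hpt) : set hpt := closure O `\` interior O.

End Heisenberg.
Notation hpt R n := (@matrix R 1 n * @matrix R 1 n * R)%type.

From mathcomp Require Import all_boot all_order all_algebra.
From mathcomp Require Import all_classical all_reals all_analysis.
From mathcomp Require Import ring lra.
Import Order.TTheory GRing.Theory Num.Theory.
Import numFieldNormedType.Exports.
Local Open Scope ring_scope.
Local Open Scope classical_set_scope.

(* Along a horizontal line, an H-convex function is an ordinary convex function of the
   line parameter.  Horizontal lines leave a horizontally bounded open set, so [u <= 0]
   follows from [u = 0] on the boundary.  For a nonpositive convex function, moving from
   [p] to [p h], with [h] horizontal, costs at most a factor [1 - 1/k] as long as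
   [p delta_k(h)] stays in the domain.  Five such horizontal moves, each of which can be tripled
   or doubled inside [B_H(xi0, 3R)], join any two points of [B_H(xi0, R)]:
   [xi -> xi0 (0,0,t1) -> xi0 (R e,0,t1) -> xi0 (R e,tau e,t2) -> xi0 (0,0,t2) -> zeta],
   which gives [-u zeta >= (2/3)(1/2)^3(2/3)(-u xi) = -u xi / 18]. *)

Set Implicit Arguments.
Unset Strict Implicit.
Unset Printing Implicit Defensive.

Section DotProduct.
Variables (R : realType) (n : nat).
Implicit Types a b c : 'rV[R]_n.

Lemma dotC a b : dotR a b = dotR b a.
Proof. by apply: eq_bigr => j _; rewrite mulrC. Qed.

Lemma dotDl a b c : dotR (a + b) c = dotR a c + dotR b c.
Proof. by rewrite /dotR -big_split; apply: eq_bigr => j _; rewrite !mxE mulrDl. Qed.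

Lemma dotZl (k : R) a c : dotR (k *: a) c = k * dotR a c.
Proof. by rewrite /dotR mulr_sumr; apply: eq_bigr => j _; rewrite !mxE mulrA. Qed.

Lemma dotNl a c : dotR (- a) c = - dotR a c.
Proof. by rewrite -scaleN1r dotZl mulN1r. Qed.

Lemma dot0l c : dotR 0 c = 0.
Proof. by rewrite -(scale0r 0) dotZl mul0r. Qed.

Lemma dotDr a b c : dotR c (a + b) = dotR c a + dotR c b.
Proof. by rewrite !(dotC c) dotDl. Qed.

Lemma dotZr (k : R) a c : dotR c (k *: a) = k * dotR c a.
Proof. by rewrite !(dotC c) dotZl. Qed.

Lemma dotNr a c : dotR c (- a) = - dotR c a.
Proof. by rewrite !(dotC c) dotNl. Qed.

Lemma dot0r c : dotR c 0 = 0.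
Proof. by rewrite dotC dot0l. Qed.

Lemma dot_ge0 a : 0 <= dotR a a.
Proof. by apply: sumr_ge0 => j _; rewrite -expr2 sqr_ge0. Qed.

Lemma exists_unit_row : (0 < n)%N -> exists e : 'rV[R]_n, dotR e e = 1.
Proof.
move=> n_gt0; exists (\row_j (j == Ordinal n_gt0)%:R).
rewrite /dotR (bigD1 (Ordinal n_gt0)) //= !mxE eqxx mulr1 big1 ?addr0 //.
by move=> j /negbTE j_neq; rewrite !mxE j_neq mul0r.
Qed.

End DotProduct.

Notation dotE := (dotDl, dotDr, dotZl, dotZr, dotNl, dotNr, dot0l, dot0r).

Section HeisenbergGroup.
Variables (R : realType) (n : nat).
Implicit Types (a b e : 'rV[R]_n) (p q s : hpt R n).

Lemma hmulA p q s : hmul (hmul p q) s = hmul p (hmul q s).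
Proof.
case: p => [[x1 y1] t1]; case: q => [[x2 y2] t2]; case: s => [[x3 y3] t3].
by rewrite /hmul /imherm /hx /hy /ht /= !addrA !dotE; congr (_, _, _); ring.
Qed.

Lemma hmulK p q : hmul (hinv p) (hmul p q) = q.
Proof.
case: p => [[x1 y1] t1]; case: q => [[x2 y2] t2].
rewrite /hmul /hinv /imherm /hx /hy /ht /= !dotE (dotC x1 y1) !addKr.
by congr (_, _, _); ring.
Qed.

Lemma hmulKV p q : hmul p (hmul (hinv p) q) = q.
Proof.
case: p => [[x1 y1] t1]; case: q => [[x2 y2] t2].
rewrite /hmul /hinv /imherm /hx /hy /ht /= !dotE (dotC x1 y1) !addNKr.
by congr (_, _, _); ring.
Qed.

Definition hor a b : hpt R n := (a, b, 0).

Lemma hmul_hor p a b :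
  hmul p (hor a b) = (hx p + a, hy p + b, ht p + 2 * (dotR (hy p) a - dotR (hx p) b)).
Proof. by rewrite /hmul /imherm /hor /= addr0. Qed.

Lemma hmul_hor0 p : hmul p (hor 0 0) = p.
Proof. by case: p => [[x y] t]; rewrite hmul_hor /= !addr0 !dotE subr0 mulr0 addr0. Qed.

Lemma hdil_hor (k : R) a b : hdil k (hor a b) = hor (k *: a) (k *: b).
Proof. by rewrite /hdil /hor /= mulr0. Qed.

Lemma hplane_hmul_hor p a b : hplane (hmul p (hor a b)) p.
Proof.
rewrite /hplane hmul_hor /hx /hy /ht /= !dotE (dotC p.1.1 p.1.2) (dotC a p.1.2).
by rewrite (dotC p.1.1 b); ring.
Qed.

Lemma gauge_lt q (c : R) : 0 < c ->
  (gauge q < c) = (znorm2 q ^+ 2 + ht q ^+ 2 < c ^+ 4).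
Proof.
move=> c_gt0; have c_sqrt : c = Num.sqrt (Num.sqrt (c ^+ 4)).
  by rewrite (exprM c 2 2) sqrtr_sqr ger0_norm ?sqr_ge0 // sqrtr_sqr gtr0_norm.
by rewrite {1}c_sqrt /gauge !ltr_sqrt ?sqrtr_gt0 ?exprn_gt0.
Qed.

Definition hline p e (l : R) : hpt R n := hmul p (hor (l *: e) 0).

Lemma hlineE p e l : hline p e l = (hx p + l *: e, hy p, ht p + l * (2 * dotR (hy p) e)).
Proof. by rewrite /hline hmul_hor addr0 !dotE; congr (_, _, _); ring. Qed.

Lemma hline0 p e : hline p e 0 = p.
Proof. by rewrite /hline scale0r hmul_hor0. Qed.

Lemma continuous_hline p e : continuous (hline p e).
Proof.
have -> : hline p e = fun l => (hx p + l *: e, hy p, ht p + l * (2 * dotR (hy p) e)).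
  by apply/funext => l; rewrite hlineE.
move=> b.
apply: (@cvg_pair _ _ _ _ (nbhs (hx p + b *: e, hy p)) (nbhs (ht p + b * (2 * dotR (hy p) e)))).
  apply: (@cvg_pair _ _ _ _ (nbhs (hx p + b *: e)) (nbhs (hy p))).
- by apply: cvgD; [exact: cvg_cst | apply: cvgZ; [exact: cvg_id | exact: cvg_cst]].
- exact: cvg_cst.
- by apply: cvgD; [exact: cvg_cst | apply: cvgM; [exact: cvg_id | exact: cvg_cst]].
Qed.

Lemma hplane_hline p e c c' : hplane (hline p e c) (hline p e c').
Proof.
rewrite /hplane !hlineE /hx /hy /ht /= !dotE (dotC e p.1.2).
by rewrite ?(dotC e p.1.1) ?(dotC p.1.1 p.1.2); ring.
Qed.

Lemma hline_dil p e c c' l :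
  hmul (hline p e c) (hdil l (hmul (hinv (hline p e c)) (hline p e c')))
  = hline p e (c + l * (c' - c)).
Proof.
rewrite !hlineE /hmul /hdil /hinv /imherm /hx /hy /ht /= !dotE.
rewrite ?(dotC e p.1.2) ?(dotC e p.1.1) ?(dotC p.1.1 p.1.2).
congr (_, _, _); last by ring.
all: by apply/rowP => j; rewrite !mxE; ring.
Qed.

Lemma dH_hline p e l : dotR e e = 1 -> dH (hline p e l) p = `|l|.
Proof.
move=> e_unit; rewrite /dH /hline hmulK /gauge /znorm2 /hor /hx /hy /ht /= !dotE e_unit.
rewrite mulr1 addr0 -expr2 expr0n addr0 sqrtr_sqr ger0_norm ?sqr_ge0 //.
by rewrite sqrtr_sqr.
Qed.

End HeisenbergGroup.

Lemma open_path_exit (R : realType) (T : topologicalType) (O : set T) (L : R -> T) (M : R) :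
  open O -> continuous L -> O (L 0) -> (forall l, 0 <= l -> O (L l) -> l <= M) ->
  exists2 b, 0 < b & (closure O `\` interior O) (L b).
Proof.
move=> O_open L_cont OL0 O_bounded.
pose S := [set l : R | 0 <= l /\ O (L l)].
have S_sup : has_sup S by split; [exists 0 | exists M => l [] /O_bounded].
have le_sup l : S l -> l <= sup S by move=> Sl; exact: sup_upper_bound.
have O_near c : O (L c) -> exists2 eps, 0 < eps & forall l, `|c - l| < eps -> O (L l).
  move=> OLc; have : nbhs (L c) O by apply: open_nbhs_nbhs.
  by move/(L_cont c)/nbhs_ballP => [eps eps_gt0 Ball]; exists eps.
have sup_gt0 : 0 < sup S.
  have [eps eps_gt0 Ball] := O_near 0 OL0.
  have : S (eps / 2).
    by split; [lra | apply: Ball; rewrite sub0r normrN ger0_norm; lra].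
  by move/le_sup; lra.
exists (sup S) => //; split.
- move=> B /(L_cont (sup S))/nbhs_ballP [eps eps_gt0 Ball].
  have [l Sl l_gt] := sup_adherent eps_gt0 S_sup.
  have := le_sup l Sl; exists (L l); split; first exact: Sl.2.
  by apply: Ball; rewrite -ball_normE /ball_ /= ger0_norm; lra.
- move=> /interior_subset /O_near [eps eps_gt0 Ball].
  have : S (sup S + eps / 2).
    split; first lra.
    by apply: Ball; rewrite opprD addrA subrr sub0r normrN ger0_norm; lra.
  by move/le_sup; lra.
Qed.

Lemma hconvex_le0 (R : realType) (n : nat) (Omega : set (hpt R n)) (u : hpt R n -> R) :
  (0 < n)%N -> open Omega -> horiz_bounded Omega -> H_convex_fun (closure Omega) u ->
  (forall p, hboundary Omega p -> u p = 0) -> forall p, Omega p -> u p <= 0.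
Proof.
move=> n_gt0 O_open [M O_hbounded] u_hconvex u_boundary p Op.
have [e e_unit] := exists_unit_row R n_gt0.
have line_in_plane l : hplane p (hline p e l).
  by have := hplane_hline p e 0 l; rewrite hline0.
have line_bounded l : Omega (hline p e l) -> `|l| <= M.
  move=> Ol; rewrite -(dH_hline p l e_unit).
  have := line_in_plane 0; rewrite hline0 => p_in_plane.
  exact: (O_hbounded p Op _ p (conj Ol (line_in_plane l)) (conj Op p_in_plane)).
have [b b_gt0 Bb] : exists2 b, 0 < b & hboundary Omega (hline p e b).
  apply: (open_path_exit (M := M) O_open (@continuous_hline _ _ p e)).
    by rewrite hline0.
  by move=> l l_ge0 /line_bounded; rewrite ger0_norm.
have [a a_gt0 Ba] : exists2 a, 0 < a & hboundary Omega (hline p e (- a)).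
  apply: (open_path_exit (L := hline p e \o -%R) (M := M) O_open).
  - by move=> l; apply: continuous_comp; [exact: oppr_continuous | exact: continuous_hline].
  - by rewrite /= oppr0 hline0.
  - by move=> l l_ge0 /line_bounded; rewrite normrN ger0_norm.
have ab_gt0 : 0 < a + b by rewrite addr_gt0.
have l_ge0 : 0 <= a / (a + b) by rewrite divr_ge0 // ltW.
have l_le1 : a / (a + b) <= 1 by rewrite ler_pdivrMr //; lra.
have := u_hconvex _ _ _ Ba.1 Bb.1 (hplane_hline p e b (- a)) l_ge0 l_le1.
rewrite hline_dil opprK [b + a]addrC mulfVK ?gt_eqF // addNr hline0.
by rewrite (u_boundary _ Ba) (u_boundary _ Bb) !mulr0 addr0.
Qed.

Section Harnack.
Variables (R : realType) (n : nat) (Omega : set (hpt R n)) (u : hpt R n -> R).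
Hypotheses (u_hconvex : H_convex_fun (closure Omega) u) (u_le0 : forall p, Omega p -> u p <= 0).

Lemma hconvex_scale p a b (k : R) : 1 <= k -> Omega p ->
  Omega (hmul p (hor (k *: a) (k *: b))) -> (1 - k^-1) * - u p <= - u (hmul p (hor a b)).
Proof.
move=> k_ge1 Op Oq; have k_gt0 : 0 < k by lra.
have l_ge0 : 0 <= k^-1 by rewrite invr_ge0 ltW.
have l_le1 : k^-1 <= 1 by rewrite invf_le1.
have := u_hconvex (subset_closure Op) (subset_closure Oq) (hplane_hmul_hor p _ _) l_ge0 l_le1.
rewrite hmulK hdil_hor !scalerA mulVf ?gt_eqF // !scale1r.
have := mulr_ge0_le0 l_ge0 (u_le0 Oq); lra.
Qed.

Variables (xi0 : hpt R n) (r : R).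
Hypotheses (r_gt0 : 0 < r) (ball_sub : BH xi0 (3 * r) `<=` Omega).

Lemma mem_ball3 q Z T : znorm2 q = Z -> ht q = T -> Z ^+ 2 + T ^+ 2 < 81 * r ^+ 4 ->
  Omega (hmul xi0 q).
Proof.
move=> <- <- q_lt; apply: ball_sub; rewrite /BH /= /dH hmulK gauge_lt ?mulr_gt0 //.
by rewrite (_ : (3 * r) ^+ 4 = 81 * r ^+ 4) //; ring.
Qed.

Lemma hconvex_scale_at q a b (k : R) : 1 <= k -> Omega (hmul xi0 q) ->
  Omega (hmul xi0 (hmul q (hor (k *: a) (k *: b)))) ->
  (1 - k^-1) * - u (hmul xi0 q) <= - u (hmul xi0 (hmul q (hor a b))).
Proof. by move=> k_ge1 Oq Ok; rewrite -hmulA; apply: hconvex_scale; rewrite ?hmulA. Qed.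

Lemma harnack_to_axis x y t : (dotR x x + dotR y y) ^+ 2 + t ^+ 2 < r ^+ 4 ->
  2 / 3 * - u (hmul xi0 (x, y, t)) <= - u (hmul xi0 (0, 0, t)).
Proof.
set N := dotR x x + dotR y y => q_lt.
have N_ge0 : 0 <= N by rewrite addr_ge0 ?dot_ge0.
have -> : (0, 0, t) = hmul (x, y, t) (hor (- x) (- y)).
  by rewrite hmul_hor /hx /hy /ht /= !dotE (dotC y x) !subrr; congr (_, _, _); ring.
rewrite (_ : 2 / 3 = 1 - 3^-1); last by lra.
apply: hconvex_scale_at; first lra.
- by apply: (mem_ball3 (Z := N) (T := t)) => //; nra.
- apply: (mem_ball3 (Z := 4 * N) (T := t)).
  + by rewrite hmul_hor /znorm2 /hx /hy /ht /= !dotE /N; ring.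
  + by rewrite hmul_hor /hx /hy /ht /= !dotE (dotC y x); ring.
  + nra.
Qed.

Lemma harnack_from_axis x y t : (dotR x x + dotR y y) ^+ 2 + t ^+ 2 < r ^+ 4 ->
  2 / 3 * - u (hmul xi0 (0, 0, t)) <= - u (hmul xi0 (x, y, t)).
Proof.
set N := dotR x x + dotR y y => q_lt.
have N_ge0 : 0 <= N by rewrite addr_ge0 ?dot_ge0.
have -> : (x, y, t) = hmul (0, 0, t) (hor x y).
  by rewrite hmul_hor /hx /hy /ht /= !dotE !add0r; congr (_, _, _); ring.
rewrite (_ : 2 / 3 = 1 - 3^-1); last by lra.
apply: hconvex_scale_at; first lra.
- by apply: (mem_ball3 (Z := 0) (T := t)); [rewrite /znorm2 /= !dotE addr0 | | nra].
- apply: (mem_ball3 (Z := 9 * N) (T := t)).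
  + by rewrite hmul_hor /znorm2 /hx /hy /ht /= !dotE /N; ring.
  + by rewrite hmul_hor /hx /hy /ht /= !dotE; ring.
  + nra.
Qed.

Lemma harnack_step_x (e : 'rV[R]_n) t : dotR e e = 1 -> t ^+ 2 < r ^+ 4 ->
  1 / 2 * - u (hmul xi0 (0, 0, t)) <= - u (hmul xi0 (r *: e, 0, t)).
Proof.
move=> e_unit t_lt; rewrite (exprM r 2 2) in t_lt.
have r2_gt0 : 0 < r ^+ 2 by rewrite exprn_gt0.
have -> : (r *: e, 0, t) = hmul (0, 0, t) (hor (r *: e) 0).
  by rewrite hmul_hor /hx /hy /ht /= !dotE add0r addr0 mulr0 subr0 mulr0 addr0.
rewrite (_ : 1 / 2 = 1 - 2^-1); last by lra.
apply: hconvex_scale_at; first lra.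
- apply: (mem_ball3 (Z := 0) (T := t)) => //; last by rewrite (exprM r 2 2); nra.
  by rewrite /znorm2 /= !dotE addr0.
- apply: (mem_ball3 (Z := 4 * r ^+ 2) (T := t)).
  + by rewrite hmul_hor /znorm2 /hx /hy /ht /= !dotE e_unit; ring.
  + by rewrite hmul_hor /hx /hy /ht /= !dotE; ring.
  + by rewrite (exprM r 2 2); nra.
Qed.

Lemma harnack_step_y (e : 'rV[R]_n) tau t :
  dotR e e = 1 -> tau ^+ 2 < r ^+ 2 -> t ^+ 2 < r ^+ 4 ->
  1 / 2 * - u (hmul xi0 (r *: e, 0, t)) <= - u (hmul xi0 (r *: e, tau *: e, t - 2 * (tau * r))).
Proof.
move=> e_unit tau_lt t_lt; rewrite (exprM r 2 2) in t_lt.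
have r2_gt0 : 0 < r ^+ 2 by rewrite exprn_gt0.
have -> : (r *: e, tau *: e, t - 2 * (tau * r)) = hmul (r *: e, 0, t) (hor 0 (tau *: e)).
  by rewrite hmul_hor /hx /hy /ht /= !dotE e_unit addr0 add0r; congr (_, _, _); ring.
rewrite (_ : 1 / 2 = 1 - 2^-1); last by lra.
apply: hconvex_scale_at; first lra.
- apply: (mem_ball3 (Z := r ^+ 2) (T := t)) => //; last by rewrite (exprM r 2 2); nra.
  by rewrite /znorm2 /= !dotE e_unit; ring.
- apply: (mem_ball3 (Z := r ^+ 2 + 4 * tau ^+ 2) (T := t - 4 * (tau * r))).
  + by rewrite hmul_hor /znorm2 /hx /hy /ht /= !dotE e_unit; ring.
  + by rewrite hmul_hor /hx /hy /ht /= !dotE e_unit; ring.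
  + have : (r ^+ 2 + 4 * tau ^+ 2) ^+ 2 < 25 * (r ^+ 2) ^+ 2 by nra.
    have : (tau * r) ^+ 2 < (r ^+ 2) ^+ 2 by rewrite exprMn; nra.
    have : (t - 4 * (tau * r)) ^+ 2 < 34 * (r ^+ 2) ^+ 2.
      by have := sqr_ge0 (t + 4 * (tau * r)); nra.
    by rewrite (exprM r 2 2); nra.
Qed.

Lemma harnack_step_back (e : 'rV[R]_n) tau t :
  dotR e e = 1 -> tau ^+ 2 < r ^+ 2 -> t ^+ 2 < r ^+ 4 ->
  1 / 2 * - u (hmul xi0 (r *: e, tau *: e, t)) <= - u (hmul xi0 (0, 0, t)).
Proof.
move=> e_unit tau_lt t_lt; rewrite (exprM r 2 2) in t_lt.
have r2_gt0 : 0 < r ^+ 2 by rewrite exprn_gt0.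
have -> : (0, 0, t) = hmul (r *: e, tau *: e, t) (hor (- (r *: e)) (- (tau *: e))).
  by rewrite hmul_hor /hx /hy /ht /= !dotE e_unit !subrr; congr (_, _, _); ring.
rewrite (_ : 1 / 2 = 1 - 2^-1); last by lra.
apply: hconvex_scale_at; first lra.
- apply: (mem_ball3 (Z := r ^+ 2 + tau ^+ 2) (T := t)) => //; last by rewrite (exprM r 2 2); nra.
  by rewrite /znorm2 /= !dotE e_unit; ring.
- apply: (mem_ball3 (Z := r ^+ 2 + tau ^+ 2) (T := t)); last by rewrite (exprM r 2 2); nra.
  + by rewrite hmul_hor /znorm2 /hx /hy /ht /= !dotE e_unit; ring.
  + by rewrite hmul_hor /hx /hy /ht /= !dotE e_unit; ring.
Qed.

Lemma harnack_along_axis (e : 'rV[R]_n) t1 t2 :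
  dotR e e = 1 -> t1 ^+ 2 < r ^+ 4 -> t2 ^+ 2 < r ^+ 4 ->
  - u (hmul xi0 (0, 0, t1)) / 8 <= - u (hmul xi0 (0, 0, t2)).
Proof.
move=> e_unit t1_lt t2_lt; pose tau := (t1 - t2) / (2 * r).
have tauE : t1 - 2 * (tau * r) = t2.
  have : tau * (2 * r) = t1 - t2 by rewrite mulfVK // mulf_neq0 // gt_eqF.
  lra.
have tau_lt : tau ^+ 2 < r ^+ 2.
  rewrite (exprM r 2 2) in t1_lt t2_lt; have r2_gt0 : 0 < r ^+ 2 by rewrite exprn_gt0.
  have : (2 * (tau * r)) ^+ 2 < 4 * (r ^+ 2) ^+ 2 by rewrite (_ : 2 * _ = t1 - t2); nra.
  nra.
have := harnack_step_x e_unit t1_lt.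
have := harnack_step_y e_unit tau_lt t1_lt; rewrite tauE.
have := harnack_step_back e_unit tau_lt t2_lt.
lra.
Qed.

Lemma harnack_ball (n_gt0 : (0 < n)%N) xi zeta : BH xi0 r xi -> BH xi0 r zeta ->
  - u xi / 18 <= - u zeta.
Proof.
have [e e_unit] := exists_unit_row R n_gt0.
rewrite /BH /= /dH !gauge_lt // -(hmulKV xi0 xi) -(hmulKV xi0 zeta) !hmulK.
case: (hmul (hinv xi0) xi) => [[x1 y1] t1]; case: (hmul (hinv xi0) zeta) => [[x2 y2] t2].
rewrite /znorm2 /hx /hy /ht /= => lt1 lt2.
have t1_lt : t1 ^+ 2 < r ^+ 4 by have := sqr_ge0 (dotR x1 x1 + dotR y1 y1); lra.
have t2_lt : t2 ^+ 2 < r ^+ 4 by have := sqr_ge0 (dotR x2 x2 + dotR y2 y2); lra.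
have := harnack_to_axis lt1; have := harnack_from_axis lt2.
have := harnack_along_axis e_unit t1_lt t2_lt.
lra.
Qed.

End Harnack.

Theorem theorem6p7 (R : realType) (n : nat) (hn : (0 < n)%N)
  (Omega : set (hpt R n)) (u : hpt R n -> R) (xi0 : hpt R n) (r : R) :
  open Omega -> horiz_bounded Omega -> eucl_convex Omega ->
  H_convex_fun (closure Omega) u ->
  (forall p, hboundary Omega p -> u p = 0) ->
  Omega xi0 -> 0 < r -> BH xi0 (3 * r) `<=` Omega ->
  forall xi zeta, BH xi0 r xi -> BH xi0 r zeta ->
    u xi / 31 >= u zeta /\ u zeta >= 31 * u xi.
Proof.
move=> O_open O_hbounded _ u_hconvex u_boundary _ r_gt0 ball_sub xi zeta Bxi Bzeta.
have u_le0 := hconvex_le0 hn O_open O_hbounded u_hconvex u_boundary.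
have ball_r_sub : BH xi0 r `<=` Omega.
  by move=> p Bp; apply: ball_sub; rewrite /BH /= in Bp *; lra.
have := harnack_ball u_hconvex u_le0 r_gt0 ball_sub hn Bxi Bzeta.
have := harnack_ball u_hconvex u_le0 r_gt0 ball_sub hn Bzeta Bxi.
have := u_le0 _ (ball_r_sub _ Bxi); have := u_le0 _ (ball_r_sub _ Bzeta).
by split; lra.
Qed.
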